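(* Let $r$ be factorizable, $n\ge1$, $\tilde r=r^{(n)}$, and $\tilde{\mathfrak f}_\pm=\mathrm{Im}(\tilde r_\pm)\subset\mathfrak g^n$. If $n=2m$ is even, then $$\tilde{\mathfrak f}_+=\tau(\mathfrak l_r\oplus\underbrace{\mathfrak g_{\rm diag}\oplus\cdots\oplus\mathfrak g_{\rm diag}}_{m-1}),\qquad\tilde{\mathfrak f}_-=\underbrace{\mathfrak g_{\rm diag}\oplus\cdots\oplus\mathfrak g_{\rm diag}}_{m};$$ if $n=2m+1$ is odd, then $$\tilde{\mathfrak f}_+=\mathfrak f_+\oplus\underbrace{\mathfrak g_{\rm diag}\oplus\cdots\oplus\mathfrak g_{\rm diag}}_{m},\qquad\tilde{\mathfrak f}_-=\underbrace{\mathfrak g_{\rm diag}\oplus\cdots\oplus\mathfrak g_{\rm diag}}_{m}\oplus\mathfrak f_-.$$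
   Context: $\mathfrak g$ is a Lie algebra, $r=\sum_ix_i\otimes y_i\in\mathfrak g\otimes\mathfrak g$ a quasitriangular $r$-matrix ($r+r^{21}$ ad-invariant, classical Yang–Baxter equation holds), factorizable meaning $r+r^{21}$ nondegenerate. For any such tensor $s=\sum a_j\otimes b_j$ on a Lie algebra, $s_+(\xi)=\sum_j\langle\xi,a_j\rangle b_j$ and $s_-(\xi)=-\sum_j\langle\xi,b_j\rangle a_j$. $\mathfrak f_\pm=\mathrm{Im}\,r_\pm$; $r^\flat_\pm=r_\pm\circ(r_+-r_-)^{-1}$; $\mathfrak l_r=\{(r^\flat_+(x),r^\flat_-(x)):x\in\mathfrak g\}\subset\mathfrak g\oplus\mathfrak g$; $\mathfrak g_{\rm diag}=\{(x,x)\}\subset\mathfrak g\oplus\mathfrak g$. On $\mathfrak g^n=\mathfrak g\oplus\cdots\oplus\mathfrak g$, for $X\in\mathfrak g^{\otimes l}$ let $(X)_j$ be its image under the embedding of $\mathfrak g$ as the $j$-th summand, and $$r^{(n)}=\sum_{j\ \mathrm{odd}}(r)_j+\sum_{j\ \mathrm{even}}(-r^{21})_j-\sum_{1\le j<k\le n}\sum_i(y_i)_j\wedge(x_i)_k,$$ with $a\wedge b=a\otimes b-b\otimes a$. $\tau$ is the automorphism of $\mathfrak g^n$ given by $\tau(x_1,x_2,x_3,\ldots,x_{n-1},x_n)=(x_1,x_3,\ldots,x_{n-1},x_n,x_2)$, where $\mathfrak l_r\oplus\mathfrak g_{\rm diag}^{m-1}$ is viewed in $\mathfrak g^n$ in the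 obvious order. *)

(* Finite-dimensional Lie algebra g over a field K, realised
   as g = K^d (row vectors 'rV[K]_d); the dual g^* is identified with K^d
   through the dual basis, so <xi, x> = xi *m x^T. *)
From HB Require Import structures.
From mathcomp Require Import all_boot all_order all_algebra.
Set Implicit Arguments. Unset Strict Implicit. Unset Printing Implicit Defensive.
Import Order.TTheory GRing.Theory Num.Theory.
Local Open Scope ring_scope.

Section LieDefs.
Variables (K : fieldType) (d : nat).

Definition ebasis (a : 'I_d) : 'rV[K]_d := delta_mx 0 a.

Definition is_lie (br : 'rV[K]_d -> 'rV[K]_d -> 'rV[K]_d) : Prop :=
  [/\ (forall (c : K) x y z, br (c *: x + y) z = c *: br x z + br y z),
      (forall (c : K) x y z, br z (c *: x + y) = c *: br z x + br z y),
      (forall x, br x x = 0) &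
      (forall x y z, br x (br y z) + br y (br z x) + br z (br x y) = 0)].

(* g (x) g is represented by d x d matrices: t a b is the coefficient of
   e_a (x) e_b.  The pure tensor x (x) y is x^T *m y. *)
Definition tpure (x y : 'rV[K]_d) : 'M[K]_d := x^T *m y.
Definition tflip (t : 'M[K]_d) : 'M[K]_d := t^T.

Definition ad2 br (x : 'rV[K]_d) (t : 'M[K]_d) : 'M[K]_d :=
  \sum_(a < d) \sum_(b < d)
     t a b *: (tpure (br x (ebasis a)) (ebasis b) + tpure (ebasis a) (br x (ebasis b))).

Definition ad_invariant br (t : 'M[K]_d) : Prop := forall x, ad2 br x t = 0.

Definition pure3 (u v w : 'rV[K]_d) (p q s : 'I_d) : K := u 0 p * v 0 q * w 0 s.

(* classical Yang-Baxter equation [r12,r13] + [r12,r23] + [r13,r23] = 0 for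
   r = sum_{a,b} r_ab e_a (x) e_b, written coefficientwise in g(x)g(x)g *)
Definition cybe br (r : 'M[K]_d) : Prop :=
  forall p q s : 'I_d,
    \sum_(a < d) \sum_(b < d) \sum_(a' < d) \sum_(b' < d)
      r a b * r a' b' *
       (pure3 (br (ebasis a) (ebasis a')) (ebasis b) (ebasis b') p q s
      + pure3 (ebasis a) (br (ebasis b) (ebasis a')) (ebasis b') p q s
      + pure3 (ebasis a) (ebasis a') (br (ebasis b) (ebasis b')) p q s) = 0.

Definition quasitriangular br (r : 'M[K]_d) : Prop :=
  ad_invariant br (r + tflip r) /\ cybe br r.

Definition factorizable br (r : 'M[K]_d) : Prop :=
  quasitriangular br r /\ r + tflip r \in unitmx.

(* s_+(xi) = sum_j <xi,a_j> b_j  and  s_-(xi) = - sum_j <xi,b_j> a_j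
   for s = sum_j a_j (x) b_j, i.e. s = sum_j a_j^T *m b_j *)
Definition splus (s : 'M[K]_d) (xi : 'rV[K]_d) : 'rV[K]_d := xi *m s.
Definition sminus (s : 'M[K]_d) (xi : 'rV[K]_d) : 'rV[K]_d := - (xi *m s^T).

(* (r_+ - r_-)(xi) = xi *m (r + r^T); its inverse (r invertible case) is
   x |-> x *m invmx (r + r^T). *)
Definition rdiff_inv (r : 'M[K]_d) (x : 'rV[K]_d) : 'rV[K]_d :=
  x *m invmx (r + tflip r).
Definition rflat_plus (r : 'M[K]_d) (x : 'rV[K]_d) := splus r (rdiff_inv r x).
Definition rflat_minus (r : 'M[K]_d) (x : 'rV[K]_d) := sminus r (rdiff_inv r x).

Definition l_r (r : 'M[K]_d) (x y : 'rV[K]_d) : Prop :=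
  exists z, x = rflat_plus r z /\ y = rflat_minus r z.

Definition img {A B : Type} (f : A -> B) (y : B) : Prop := exists x, y = f x.
Definition img_on {A B : Type} (f : A -> B) (S : A -> Prop) (y : B) : Prop :=
  exists x, S x /\ y = f x.

Variable n : nat.
(* g^n : row j (j : 'I_n) of X : 'M_(n,d) is the j-th component;
   dual (g^n)^* likewise, with pairing sum_j <xi_j, x_j>. *)

(* g^n (x) g^n: block matrix, block (j,k) in g (x) g is the component in
   (g)_j (x) (g)_k *)
Definition tens := 'M['M[K]_d]_n.

Definition embT (j k : 'I_n) (X : 'M[K]_d) : tens :=
  \matrix_(p, q) (if (p == j) && (q == k) then X else 0).
Definition emb2 (j : 'I_n) (X : 'M[K]_d) : tens := embT j j X.
Definition tpure_n (j : 'I_n) (u : 'rV[K]_d) (k : 'I_n) (v : 'rV[K]_d) : tens :=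
  embT j k (tpure u v).
Definition wedge_n j u k v : tens := tpure_n j u k v - tpure_n k v j u.

(* r^{(n)}, with r = sum_{a,b} (r_ab e_a) (x) e_b, i.e. x_i = r_ab e_a,
   y_i = e_b.  Indices are 0-based: the paper's odd j (1-based) are the
   even ordinals j. *)
Definition rn (r : 'M[K]_d) : tens :=
  \sum_(j < n) emb2 j (if ~~ odd j then r else - tflip r)
  - \sum_(j < n) \sum_(k < n | (j < k)%N) \sum_(a < d) \sum_(b < d)
      wedge_n j (ebasis b) k (r a b *: ebasis a).

Definition tn_plus (T : tens) (xi : 'M[K]_(n, d)) : 'M[K]_(n, d) :=
  \matrix_(k < n) (\sum_(j < n) row j xi *m T j k).
Definition tn_minus (T : tens) (xi : 'M[K]_(n, d)) : 'M[K]_(n, d) :=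
  \matrix_(j < n) (- \sum_(k < n) row k xi *m (T j k)^T).

(* tau(x_1,x_2,x_3,...,x_n) = (x_1,x_3,...,x_n,x_2)   (0-based indices) *)
Definition tau_idx (k : nat) : nat :=
  if k == 0%N then 0%N else if k == n.-1 then 1%N else k.+1.
Definition tau (X : 'M[K]_(n, d)) : 'M[K]_(n, d) :=
  \matrix_(k < n) row (insubd k (tau_idx k)) X.

(* the components are paired diagonally starting at (0-based) index s:
   x_s = x_{s+1}, x_{s+2} = x_{s+3}, ...  (for every such pair inside g^n) *)
Definition diag_from (s : nat) (X : 'M[K]_(n, d)) : Prop :=
  forall i j : 'I_n, (s <= i)%N -> ~~ odd (i - s) -> val j = i.+1 ->
    row i X = row j X.

Definition lr_diag (r : 'M[K]_d) (X : 'M[K]_(n, d)) : Prop :=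
  (forall i j : 'I_n, val i = 0%N -> val j = 1%N -> l_r r (row i X) (row j X))
  /\ diag_from 2 X.

Definition fplus_diag (r : 'M[K]_d) (X : 'M[K]_(n, d)) : Prop :=
  (forall i : 'I_n, val i = 0%N -> img (splus r) (row i X)) /\ diag_from 1 X.
Definition diag_fminus (r : 'M[K]_d) (X : 'M[K]_(n, d)) : Prop :=
  diag_from 0 X /\ (forall i : 'I_n, val i = n.-1 -> img (sminus r) (row i X)).

End LieDefs.

(* Write t = r + r^{21} and, for xi in (g^n)^*, let P_c be the sum of its first c
   components.  Block (j, k) of r^(n) is -r^{21} when j < k + odd k and r otherwise
   (0-based indices), so the k-th component of r~_+(xi) is r_+(P_n) - t(P_{k + odd k}) and
   the j-th component of r~_-(xi) is r_+(P_n) - t(P_{j + even j}).  As t is invertible and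
   the P_c with 0 < c < n are arbitrary, the image consists of the tuples whose components
   sharing the same index c agree, the components with c = 0 being r_+(w) and those with
   c = n being r_+(w) - t(w) = r_-(w), for a common w = P_n.  The equal indices come in
   adjacent pairs, which gives the diagonals; for n even both ends occur and form l_r,
   which tau moves to the front. *)

From HB Require Import structures.
From mathcomp Require Import all_boot all_order all_algebra zify.
Set Implicit Arguments. Unset Strict Implicit. Unset Printing Implicit Defensive.
Import Order.TTheory GRing.Theory Num.Theory.
Local Open Scope ring_scope.

Lemma eq_img (A B : Type) (f g : A -> B) (y : B) : f =1 g -> img f y <-> img g y.
Proof. by move=> fg; split=> -[x ->]; exists x. Qed.

Section TensorBlocks.
Variables (K : fieldType) (d n : nat).

Lemma embT_is_zmod_morphism (j k : 'I_n) : zmod_morphism (@embT K d n j k).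
Proof. by move=> X Y; apply/matrixP=> p q; rewrite !mxE; case: ifP; rewrite ?subr0. Qed.

HB.instance Definition _ j k :=
  GRing.isZmodMorphism.Build _ _ (@embT K d n j k) (embT_is_zmod_morphism j k).

Lemma sum_tpure_ebasis (M : 'M[K]_d) :
  \sum_(a < d) \sum_(b < d) tpure (M a b *: ebasis K a) (ebasis K b) = M.
Proof.
rewrite [RHS]matrix_sum_delta; apply: eq_bigr => a _; apply: eq_bigr => b _.
by rewrite /tpure /ebasis linearZ /= -scalemxAl trmx_delta mul_delta_mx.
Qed.

Lemma sum_wedge_ebasis (M : 'M[K]_d) (j k : 'I_n) :
  \sum_(a < d) \sum_(b < d) wedge_n j (ebasis K b) k (M a b *: ebasis K a)
  = embT j k M^T - embT k j M.
Proof.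
have flip u v : tpure v u = (tpure u v)^T by rewrite /tpure trmx_mul trmxK.
rewrite -[in embT j k _](sum_tpure_ebasis M) -[in embT k j _](sum_tpure_ebasis M).
rewrite /wedge_n /tpure_n !raddf_sum -big_split; apply: eq_bigr => a _.
by rewrite !raddf_sum -big_split; apply: eq_bigr => b _; rewrite [in LHS]flip.
Qed.

End TensorBlocks.

Lemma sum_pairs_indicator (V : zmodType) (I : finType) (R : rel I) (i0 j0 : I) (v : V) :
  \sum_i \sum_(j | R i j) (if (i0 == i) && (j0 == j) then v else 0)
  = if R i0 j0 then v else 0.
Proof.
rewrite (bigD1 i0) //= eqxx [X in _ + X]big1 ?addr0; last first.
  by move=> i; rewrite eq_sym => /negbTE ->; rewrite big1.
case: ifP => R0; last by rewrite big1 // => j Rj; case: eqP => // ej; rewrite -ej R0 in Rj.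
rewrite (bigD1 j0) //= eqxx [X in _ + X]big1 ?addr0 // => j.
by case/andP=> _; rewrite eq_sym => /negbTE ->.
Qed.

(* The k-th component of r~_+(xi) (s = 0) or r~_-(xi) (s = 1) depends on the partial
   sum of the first [cut s k] components of xi. *)
Definition cut (s k : nat) : nat := k + odd (k + s).

Lemma cut_eq0 s k : (s <= 1)%N -> (cut s k == 0%N) = (k == 0%N) && (s == 0%N).
Proof. by rewrite /cut; case: s => [|[|]] //=; case: k => //= k; rewrite addn0. Qed.

Lemma cut_eqn s k n : (k < n)%N -> (cut s k == n) = (k.+1 == n) && ~~ odd (n + s).
Proof.
rewrite /cut; have := odd_double_half (k + s); have := odd_double_half (n + s).
lia.
Qed.

Lemma cut_leq s k n : (k < n)%N -> (cut s k <= n)%N.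
Proof. by rewrite /cut; have := leq_b1 (odd (k + s)); lia. Qed.

Lemma ltn_cut0_cut1 (j k : nat) : (j < cut 0 k)%N = ~~ (k < cut 1 j)%N.
Proof.
rewrite /cut addn0 addn1 /= -leqNgt.
by have := odd_double_half j; have := odd_double_half k; lia.
Qed.

Section Blocks.
Variables (K : fieldType) (d n : nat).

Lemma same_cut_diag_from s (X : 'M[K]_(n, d)) : (s <= 1)%N ->
  (forall k l : 'I_n, cut s k = cut s l -> row k X = row l X) <-> diag_from (1 - s) X.
Proof.
move=> s_le1; split=> [Xc i j le_i ev_i ji | D].
  apply: Xc; rewrite /cut ji !addSn.
  have := odd_double_half (i + s); have := odd_double_half (i + s).+1.
  by have := odd_double_half (i - (1 - s)); lia.
have D' (k l : 'I_n) : (k <= l)%N -> cut s k = cut s l -> row k X = row l X.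
  move=> le_kl; case: (eqVneq k l) => [-> //|]; rewrite /cut -val_eqE /= => /negP ne_kl.
  have := odd_double_half (k + s); have := odd_double_half (l + s).
  have := odd_double_half (k - (1 - s)); move=> h1 h2 h3 ekl.
  by apply: D => /=; lia.
move=> k l; case: (leqP k l) => [|/ltnW] le; first exact: D'.
by move/esym/(D' _ _ le)/esym.
Qed.

End Blocks.

Lemma rn_entry (K : fieldType) (d n : nat) (r : 'M[K]_d) (j k : 'I_n) :
  rn n r j k = if (j < cut 0 k)%N then - r^T else r.
Proof.
rewrite /rn /cut addn0; under [X in _ - X]eq_bigr do under eq_bigr do rewrite sum_wedge_ebasis.
rewrite !mxE !summxE; under [X in _ - X]eq_bigr do rewrite summxE.
under [X in _ - X]eq_bigr do under eq_bigr do rewrite !mxE.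
under [X in _ - X]eq_bigr do rewrite sumrB.
rewrite sumrB sum_pairs_indicator.
under [X in _ - (_ - X)]eq_bigr do under eq_bigr do rewrite andbC.
rewrite sum_pairs_indicator (bigD1 j) //= [X in _ + X - _]big1 ?addr0; last first.
  by move=> i; rewrite !mxE eq_sym => /negbTE ->.
rewrite !mxE eqxx /tflip; case: (ltngtP j k) => [jk|kj|/val_inj ->].
- by rewrite -val_eqE /= gtn_eqF // ltn_addr // sub0r subr0.
- rewrite -val_eqE /= ltn_eqF // ifF ?sub0r ?opprK //; apply/negbTE.
  by rewrite -leqNgt (leq_trans _ kj) // -addn1 leq_add2l leq_b1.
- by rewrite eqxx subr0; case: (odd k); rewrite /= ?addn1 ?addn0 ?ltnSn ?ltnn subr0.
Qed.

Section PartialSums.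
Variables (K : fieldType) (d n : nat).

Definition psum (xi : 'M[K]_(n, d)) (c : nat) : 'rV[K]_d :=
  \sum_(j < n | (j < c)%N) row j xi.

Lemma psum_n (xi : 'M[K]_(n, d)) : psum xi n = \sum_(j < n) row j xi.
Proof. by apply: eq_bigl => j; rewrite ltn_ord. Qed.

Lemma psum0 (xi : 'M[K]_(n, d)) : psum xi 0 = 0.
Proof. exact: big_pred0. Qed.

Definition of_psums (P : nat -> 'rV[K]_d) : 'M[K]_(n, d) :=
  \matrix_(j < n) (P j.+1 - P j).

Lemma psum_of_psums (P : nat -> 'rV[K]_d) c :
  P 0%N = 0 -> (c <= n)%N -> psum (of_psums P) c = P c.
Proof.
move=> P0 le_cn; rewrite /psum; under eq_bigr do rewrite rowK.
rewrite -(big_ord_widen _ (fun j => P j.+1 - P j) le_cn) -/(index_iota 0 c).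
by rewrite -(big_mkord xpredT (fun j => P j.+1 - P j)) telescope_sumr // P0 subr0.
Qed.

End PartialSums.

Section ImageFormula.
Variables (K : fieldType) (d n : nat) (r : 'M[K]_d).
Local Notation t := (r + r^T).

Definition psum_image (c : 'I_n -> nat) (xi : 'M[K]_(n, d)) : 'M[K]_(n, d) :=
  \matrix_(k < n) (psum xi n *m r - psum xi (c k) *m t).

Lemma splus_sub_t (w : 'rV[K]_d) : splus r w - w *m t = sminus r w.
Proof. by rewrite /splus mulmxDr opprD addrA subrr sub0r. Qed.

Lemma sum_rows_step (xi : 'M[K]_(n, d)) c :
  \sum_(j < n) row j xi *m (if (j < c)%N then - r^T else r)
  = psum xi n *m r - psum xi c *m t.
Proof.
rewrite psum_n /psum [X in _ - X *m _]big_mkcond /= !mulmx_suml -sumrB; apply: eq_bigr => j _.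
case: ifP => _; last by rewrite mul0mx subr0.
by rewrite [RHS]splus_sub_t mulmxN.
Qed.

Lemma tn_plus_rn : tn_plus (rn n r) =1 psum_image (cut 0).
Proof.
move=> xi; apply/row_matrixP => k; rewrite !rowK.
by under eq_bigr do rewrite rn_entry; rewrite sum_rows_step.
Qed.

Lemma tn_minus_rn : tn_minus (rn n r) =1 psum_image (cut 1).
Proof.
move=> xi; apply/row_matrixP => j; rewrite !rowK -sum_rows_step -sumrN.
apply: eq_bigr => k _; rewrite rn_entry -mulmxN ltn_cut0_cut1.
by case: (k < cut 1 j)%N; rewrite /= ?linearN /= ?opprK ?trmxK.
Qed.

Hypothesis t_unit : t \in unitmx.
Hypothesis n_gt0 : (0 < n)%N.

Lemma img_psum_image (c : 'I_n -> nat) (X : 'M[K]_(n, d)) :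
  (forall k, c k <= n)%N ->
  img (psum_image c) X <->
  (exists w, (forall k, c k = 0%N -> row k X = splus r w) /\
             (forall k, c k = n -> row k X = sminus r w)) /\
  (forall k l, c k = c l -> row k X = row l X).
Proof.
move=> c_le; split.
  case=> xi ->; split=> [|k l ckl]; last by rewrite !rowK ckl.
  exists (psum xi n); split=> k ck; rewrite rowK ck.
    by rewrite psum0 mul0mx subr0.
  exact: splus_sub_t.
case=> -[w [X0 Xn]] Xc.
(* Prescribe the partial sums: 0 at c = 0, w at c = n, and in between the solution
   of r_+(w) - t(P c) = (the common row with index c). *)
pose Z v := if [pick k | c k == v] is Some k then row k X else 0.
pose P v := if v == 0%N then 0 else if v == n then w else (w *m r - Z v) *m invmx t.
have Pn : P n = w by rewrite /P eqxx gtn_eqF.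
exists (of_psums n P); apply/row_matrixP => k; rewrite rowK !psum_of_psums // Pn.
rewrite /P; case: eqP => [/X0 ->|ck0]; first by rewrite mul0mx subr0.
case: eqP => [/Xn ->|ckn]; first by rewrite -splus_sub_t.
rewrite mulmxKV // opprB addrC subrK /Z; case: pickP => [l /eqP/Xc //|/(_ k)].
by rewrite eqxx.
Qed.

End ImageFormula.

Lemma l_rE (K : fieldType) d (r : 'M[K]_d) (x y : 'rV[K]_d) : r + r^T \in unitmx ->
  l_r r x y <-> exists w, x = splus r w /\ y = sminus r w.
Proof.
move=> t_unit; split=> -[z [-> ->]]; first by exists (rdiff_inv r z).
by exists (z *m (r + r^T)); rewrite /rflat_plus /rflat_minus /rdiff_inv mulmxK.
Qed.

Section Tau.
Variables (K : fieldType) (d n : nat).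
Hypothesis n_gt1 : (1 < n)%N.

Definition tau_ord (k : 'I_n) : 'I_n := insubd k (tau_idx n k).

Definition tau_inv_idx (i : nat) : nat :=
  if i == 0%N then 0%N else if i == 1%N then n.-1 else i.-1.

Definition tau_inv_ord (i : 'I_n) : 'I_n := insubd i (tau_inv_idx i).

Lemma val_tau_ord k : val (tau_ord k) = tau_idx n k.
Proof.
apply: insubdK; rewrite unfold_in /tau_idx.
by have := ltn_ord k; (repeat case: ifPn => /eqP ?); lia.
Qed.

Lemma val_tau_inv_ord i : val (tau_inv_ord i) = tau_inv_idx i.
Proof.
apply: insubdK; rewrite unfold_in /tau_inv_idx.
by have := ltn_ord i; (repeat case: ifPn => /eqP ?); lia.
Qed.

Lemma tau_ordK : cancel tau_ord tau_inv_ord.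
Proof.
move=> k; apply: val_inj; rewrite val_tau_inv_ord val_tau_ord /tau_idx /=.
have [-> //|k0] := eqVneq (k : nat) 0%N.
have [-> //|kn] := eqVneq (k : nat) n.-1.
by rewrite /tau_inv_idx /= eqSS (negbTE k0).
Qed.

Lemma val_tau_ord_mid (k : 'I_n) : (0 < k < n.-1)%N -> val (tau_ord k) = k.+1.
Proof. by rewrite val_tau_ord /tau_idx => /andP[/gtn_eqF -> /ltn_eqF ->]. Qed.

Lemma val_tau_inv_ord_ge2 (i : 'I_n) : (2 <= i)%N -> val (tau_inv_ord i) = i.-1.
Proof. by rewrite val_tau_inv_ord /tau_inv_idx; case: (nat_of_ord i) => [|[]]. Qed.

Lemma row_tau (X : 'M[K]_(n, d)) k : row k (tau X) = row (tau_ord k) X.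
Proof. exact: rowK. Qed.

Variable r : 'M[K]_d.
Hypothesis t_unit : r + r^T \in unitmx.

Lemma img_on_tau_lr_diag (X : 'M[K]_(n, d)) : ~~ odd n ->
  img_on (@tau K d n) (lr_diag r) X <->
  (exists w, (forall k : 'I_n, val k = 0%N -> row k X = splus r w) /\
             (forall k : 'I_n, val k = n.-1 -> row k X = sminus r w)) /\ diag_from 1 X.
Proof.
move=> ev_n; have n_gt0 : (0 < n)%N by lia.
pose i0 := Ordinal n_gt0; pose i1 := Ordinal n_gt1.
split=> [[Y [[L D] ->]] | [[w [X0 Xn]] D]].
  have [w [Y0 Y1]] := (l_rE _ _ t_unit).1 (L i0 i1 erefl erefl).
  split; last first.
    move=> i j le1i ev_i ji; rewrite !row_tau.
    have hn := odd_double_half n; have hi := odd_double_half (i - 1).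
    have j_lt := ltn_ord j; rewrite ji in j_lt.
    have mid_i : (0 < i < n.-1)%N by lia.
    have mid_j : (0 < j < n.-1)%N by rewrite ji; lia.
    by apply: D; rewrite /= !val_tau_ord_mid // ji; lia.
  exists w; split=> k k_end; rewrite row_tau.
  - suff -> : tau_ord k = i0 by [].
    by apply: val_inj; rewrite val_tau_ord /tau_idx k_end.
  - suff -> : tau_ord k = i1 by [].
    by apply: val_inj; rewrite val_tau_ord /tau_idx k_end eqxx; case: eqP => //=; lia.
exists (\matrix_i row (tau_inv_ord i) X); split; last first.
  by apply/row_matrixP => k; rewrite row_tau rowK tau_ordK.
split=> [i j i_0 j_1 | i j le2i ev_i ji]; rewrite !rowK.
  apply/(l_rE _ _ t_unit); exists w; move: i_0 j_1 => /= i_0 j_1.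
  by split; [apply: X0 | apply: Xn]; rewrite val_tau_inv_ord /tau_inv_idx ?i_0 ?j_1.
apply: D; rewrite /= ?val_tau_inv_ord_ge2 ?ji //; lia.
Qed.

End Tau.

Section Cases.
Variables (K : fieldType) (d n : nat) (r : 'M[K]_d).
Hypothesis t_unit : r + r^T \in unitmx.
Hypothesis n_gt0 : (0 < n)%N.

Lemma img_cut s (X : 'M[K]_(n, d)) : (s <= 1)%N ->
  img (psum_image r (cut s)) X <->
  (exists w, (forall k : 'I_n, cut s k = 0%N -> row k X = splus r w) /\
             (forall k : 'I_n, cut s k = n -> row k X = sminus r w)) /\
  diag_from (1 - s) X.
Proof.
move=> s_le1; rewrite img_psum_image // => [|k]; last exact: cut_leq.
by rewrite same_cut_diag_from.
Qed.

Lemma img_tn_minus_even (X : 'M[K]_(n, d)) : ~~ odd n ->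
  img (tn_minus (rn n r)) X <-> diag_from 0 X.
Proof.
move=> ev_n; rewrite (eq_img X (tn_minus_rn r)) img_cut //.
split=> [[] // | D]; split=> //; exists 0; split=> k /eqP.
  by rewrite cut_eq0 // andbF.
by rewrite cut_eqn // addn1 /= ev_n andbF.
Qed.

Lemma img_tn_minus_odd (X : 'M[K]_(n, d)) : odd n ->
  img (tn_minus (rn n r)) X <-> diag_fminus r X.
Proof.
move=> odd_n; rewrite (eq_img X (tn_minus_rn r)) img_cut //.
have last_lt : (n.-1 < n)%N by rewrite prednK.
split=> [[[w [_ Xn]] D] | [D /(_ (Ordinal last_lt) erefl) [w Xw]]].
  split=> // i i_last; exists w; apply: Xn; apply/eqP.
  by rewrite cut_eqn // addn1 /= odd_n andbT /= i_last prednK.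
split=> //; exists w; split=> k /eqP; first by rewrite cut_eq0 // andbF.
rewrite cut_eqn // addn1 /= odd_n andbT => /eqP k_last.
by suff -> : k = Ordinal last_lt by []; apply: val_inj => /=; lia.
Qed.

Lemma img_tn_plus_odd (X : 'M[K]_(n, d)) : odd n ->
  img (tn_plus (rn n r)) X <-> fplus_diag r X.
Proof.
move=> odd_n; rewrite (eq_img X (tn_plus_rn r)) img_cut //.
split=> [[[w [X0 _]] D] | [/(_ (Ordinal n_gt0) erefl) [w Xw] D]].
  by split=> // i /= i_0; exists w; apply: X0; apply/eqP; rewrite cut_eq0 // i_0.
split=> //; exists w; split=> k /eqP; last by rewrite cut_eqn // addn0 odd_n andbF.
rewrite cut_eq0 // andbT => /eqP k_0.
by suff -> : k = Ordinal n_gt0 by []; exact: val_inj.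
Qed.

Lemma img_tn_plus_even (X : 'M[K]_(n, d)) : ~~ odd n ->
  img (tn_plus (rn n r)) X <-> img_on (@tau K d n) (lr_diag r) X.
Proof.
move=> ev_n; have n_gt1 : (1 < n)%N by move: ev_n n_gt0; case: n => [|[]].
rewrite (eq_img X (tn_plus_rn r)) img_cut // img_on_tau_lr_diag //.
have cut_0 (k : 'I_n) : cut 0 k = 0%N <-> val k = 0%N.
  by rewrite /cut addn0 /=; have := odd_double_half k; lia.
have cut_n (k : 'I_n) : cut 0 k = n <-> val k = n.-1.
  rewrite /cut addn0 /=; have := odd_double_half k; have := odd_double_half n.
  by have := ltn_ord k; lia.
by split=> -[[w [X0 Xn]] D]; split=> //; exists w;
  split=> k; [move/cut_0/X0 | move/cut_n/Xn | move/cut_0/X0 | move/cut_n/Xn].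
Qed.

End Cases.

Theorem lemma5p1 (K : fieldType) (d : nat)
    (br : 'rV[K]_d -> 'rV[K]_d -> 'rV[K]_d) (r : 'M[K]_d) (n : nat) :
  is_lie br -> factorizable br r -> (1 <= n)%N ->
  (forall m : nat, n = (2 * m)%N ->
     (forall X : 'M[K]_(n, d),
        img (tn_plus (rn n r)) X <-> img_on (@tau K d n) (lr_diag r) X) /\
     (forall X : 'M[K]_(n, d),
        img (tn_minus (rn n r)) X <-> diag_from 0 X)) /\
  (forall m : nat, n = (2 * m + 1)%N ->
     (forall X : 'M[K]_(n, d),
        img (tn_plus (rn n r)) X <-> fplus_diag r X) /\
     (forall X : 'M[K]_(n, d),
        img (tn_minus (rn n r)) X <-> diag_fminus r X)).
Proof.
move=> _ [_ t_unit] n_gt0; split=> m n_eq.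
  have ev_n : ~~ odd n by rewrite n_eq mul2n odd_double.
  by split=> X; [exact: img_tn_plus_even | exact: img_tn_minus_even].
have odd_n : odd n by rewrite n_eq addn1 /= mul2n odd_double.
by split=> X; [exact: img_tn_plus_odd | exact: img_tn_minus_odd].
Qed.
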